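(* Let $n>1$, let $L_1,\dots,L_n$ be complete lattices, let $f:L_1\times\dots\times L_n\to L_1\times\dots\times L_n$ be monotone, let $B$ be a binding map on $\{1,\dots,n\}$, let $i,j\in\{1,\dots,n\}$ and $a_j\in L_j$. If $i<j$, then \[ nested(n,i,B(j\coloneq a_j),f)=nested(n-1,i,Sp_jB,Sp_{j,a_j}f). \] If $i>j$, then \[ nested(n,i,B(j\coloneq a_j),f)=nested(n-1,i-1,Sp_jB,Sp_{j,a_j}f). \]
   Context: For any $m\ge1$, complete lattices $M_1,\dots,M_m$ and monotone $g:M_1\times\dots\times M_m\to M_1\times\dots\times M_m$ with projections $g_1,\dots,g_m$: a binding map is a map $B:\{1,\dots,m\}\to\big(\bigsqcup_k M_k\big)\sqcup\{undef\}$ with $B(k)\in M_k$ whenever $B(k)\neq undef$ ($undef$ is a special symbol meaning ''unbound''); $B(j\coloneq v)$ is the map sending $j$ to $v$ and $k\neq j$ to $B(k)$. The nested fixpoint is defined recursively by \[ nested(m,i,B,g)=\mu x_i.\, g_i(v(x_i)), \] where $v(x_i)\in M_1\times\dots\times M_m$ has $k$-th coordinate: $x_i$ if $k=i$; otherwise $B(k)$ if $B(k)\neq undef$; otherwise $nested(m,k,B(i\coloneq x_i),g)$. Here $\mu x_i.\,h(x_i)$ is the least fixed point of the monotone map $h$ on $M_i$ (the recursion terminates since each recursive call binds a previously unbound coordinate). Specialization: for $f$ on $L_1\times\dots\times L_n$, $j\in\{1,\dots,n\}$ and $a_j\in L_j$, identify $L_1\times\dots\times\widehat{L_j}\times\dots\times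 L_n$ with a product of $n-1$ lattices indexed by $1,\dots,n-1$ (coordinate $h<j$ is $L_h$, coordinate $h\ge j$ is $L_{h+1}$). For $\vec y=(y_1,\dots,y_{n-1})$ let $E_{j,a_j}\vec y=(y_1,\dots,y_{j-1},a_j,y_j,\dots,y_{n-1})\in L_1\times\dots\times L_n$. Then $Sp_{j,a_j}f$ is the monotone self-map of this $(n-1)$-fold product with coordinates $(Sp_{j,a_j}f)_h(\vec y)=f_h(E_{j,a_j}\vec y)$ for $1\le h<j$ and $(Sp_{j,a_j}f)_h(\vec y)=f_{h+1}(E_{j,a_j}\vec y)$ for $j\le h\le n-1$. Correspondingly, $Sp_jB$ is the binding map on $\{1,\dots,n-1\}$ with $(Sp_jB)(h)=B(h)$ for $h<j$ and $(Sp_jB)(h)=B(h+1)$ for $j\le h\le n-1$. *)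

(* Indices are 0-based ordinals 'I_m (paper: 1-based). *)
From mathcomp Require Import all_boot.
Set Implicit Arguments.
Unset Strict Implicit.
Unset Printing Implicit Defensive.

Record completeLattice := CompleteLattice {
  carrier :> Type;
  le : carrier -> carrier -> Prop;
  le_refl : forall x, le x x;
  le_trans : forall x y z, le x y -> le y z -> le x z;
  le_anti : forall x y, le x y -> le y x -> x = y;
  sup : (carrier -> Prop) -> carrier;
  sup_ub : forall (S : carrier -> Prop) x, S x -> le x (sup S);
  sup_least : forall (S : carrier -> Prop) y,
      (forall x, S x -> le x y) -> le (sup S) y
}.
Arguments le {c}.
Arguments sup {c}.

Definition inf (L : completeLattice) (S : L -> Prop) : L :=
  sup (fun y => forall x, S x -> le y x).
Definition bot (L : completeLattice) : L := sup (fun _ : L => False).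

Definition monotone1 (L : completeLattice) (h : L -> L) :=
  forall x y, le x y -> le (h x) (h y).

(* Least fixed point mu x. h(x): for monotone h this is the least fixed
   point (Knaster--Tarski: the infimum of all prefixed points). *)
Definition lfp (L : completeLattice) (h : L -> L) : L :=
  inf (fun x => le (h x) x).

Definition prodL (m : nat) (L : 'I_m -> completeLattice) :=
  forall k : 'I_m, L k.

Definition prod_le (m : nat) (L : 'I_m -> completeLattice) (x y : prodL L) :=
  forall k, le (x k) (y k).

Definition monotone (m : nat) (L : 'I_m -> completeLattice)
  (g : prodL L -> prodL L) :=
  forall x y, prod_le x y -> prod_le (g x) (g y).

(* Binding maps: None plays the role of the symbol "undef". *)
Definition binding (m : nat) (L : 'I_m -> completeLattice) :=
  forall k : 'I_m, option (L k).

Definition bind (m : nat) (L : 'I_m -> completeLattice) (B : binding L)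
  (j : 'I_m) (v : L j) : binding L :=
  @dfwith _ (fun k => option (L k)) B j (Some v).

(* The recursion is driven by a fuel argument; with
   fuel m it never runs out (each recursive call binds a new coordinate,
   so the recursion depth is at most m), hence [nested] below coincides
   with the recursive definition of the paper. *)
Fixpoint nested_fuel (fuel : nat) (m : nat) (L : 'I_m -> completeLattice)
  (g : prodL L -> prodL L) (i : 'I_m) (B : binding L) {struct fuel} : L i :=
  match fuel with
  | 0 => bot (L i)
  | fuel'.+1 =>
      lfp (fun x : L i =>
        g (@dfwith _ (fun k => L k)
             (fun k => match B k with
                       | Some b => b
                       | None => nested_fuel fuel' g k (bind B x)
                       end) i x) i)
  end.

Definition nested (m : nat) (L : 'I_m -> completeLattice) (i : 'I_m)
  (B : binding L) (g : prodL L -> prodL L) : L i :=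
  nested_fuel m g i B.

(* Specialization.  Removing coordinate j of 'I_n, the remaining
   coordinates are indexed by 'I_n.-1 via [lift j] (h |-> h if h < j,
   h+1 otherwise), exactly the paper's identification. *)

Lemma unlift_someE n (j k : 'I_n) h : unlift j k = Some h -> lift j h = k.
Proof. by case: unliftP => // h' -> [<-]. Qed.

Lemma unlift_noneE n (j k : 'I_n) : unlift j k = None -> j = k.
Proof. by case: unliftP. Qed.

Definition Ext (n : nat) (L : 'I_n -> completeLattice) (j : 'I_n) (a : L j)
  (y : prodL (fun h : 'I_n.-1 => L (lift j h))) : prodL L :=
  fun k =>
    match unlift j k as o return unlift j k = o -> L k with
    | Some h => fun e => eq_rect (lift j h) (fun k => L k) (y h) k
                                 (unlift_someE e)
    | None => fun e => eq_rect j (fun k => L k) a k (unlift_noneE e)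
    end erefl.

Definition SpF (n : nat) (L : 'I_n -> completeLattice) (j : 'I_n) (a : L j)
  (f : prodL L -> prodL L) :
  prodL (fun h : 'I_n.-1 => L (lift j h)) ->
  prodL (fun h : 'I_n.-1 => L (lift j h)) :=
  fun y h => f (Ext a y) (lift j h).

Definition SpB (n : nat) (L : 'I_n -> completeLattice) (j : 'I_n)
  (B : binding L) : binding (fun h : 'I_n.-1 => L (lift j h)) :=
  fun h => B (lift j h).

From mathcomp Require Import all_boot.
From Stdlib Require Import FunctionalExtensionality.
Set Implicit Arguments.
Unset Strict Implicit.
Unset Printing Implicit Defensive.

(* Once coordinate j is bound to a, every fuel level of the nested fixpoint
   of f evaluates f exactly on vectors E_{j,a} y, so by induction on the fuel
   it coincides with the nested fixpoint of Sp_{j,a} f at the same fuel.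
   The two sides of the theorem use fuel n and n - 1; both exceed the number
   of unbound coordinates, which bounds the recursion depth, so the fuel
   difference is invisible.  The cases i < j and i > j are the same identity
   once i is written as lift j i'. *)

Section Extension.
Variables (n : nat) (L : 'I_n -> completeLattice) (j : 'I_n) (a : L j)
  (y : prodL (fun h : 'I_n.-1 => L (lift j h))).

Lemma ExtE k (o : option 'I_n.-1) (e : unlift j k = o) :
  Ext a y k = match o as o0 return unlift j k = o0 -> L k with
    | Some h => fun e =>
        eq_rect (lift j h) (fun k => L k) (y h) k (unlift_someE e)
    | None => fun e =>
        eq_rect j (fun k => L k) a k (unlift_noneE e)
    end e.
Proof. by rewrite /Ext; case: o / e. Qed.

Lemma Ext_lift h : Ext a y (lift j h) = y h.
Proof.
by rewrite (ExtE (liftK j h)) (eq_irrelevance (unlift_someE (liftK j h)) erefl).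
Qed.

Lemma Ext_pivot : Ext a y j = a.
Proof.
rewrite (ExtE (unlift_none j)).
by rewrite (eq_irrelevance (unlift_noneE (unlift_none j)) erefl).
Qed.

End Extension.

Section SpecializedBinding.
Variables (n : nat) (L : 'I_n -> completeLattice) (j : 'I_n).

Lemma SpB_bind_lift (C : binding L) i' (x : L (lift j i')) :
  SpB j (bind C x) = @bind _ (fun h : 'I_n.-1 => L (lift j h)) (SpB j C) i' x.
Proof.
apply: functional_extensionality_dep => h; rewrite /SpB /bind.
have [<-|ne] := eqVneq i' h; first by rewrite !dfwith_in.
by rewrite !dfwith_out // (inj_eq (@lift_inj _ j)).
Qed.

Lemma SpB_bind_pivot (C : binding L) (a : L j) : SpB j (bind C a) = SpB j C.
Proof.
apply: functional_extensionality_dep => h.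
by rewrite /SpB /bind dfwith_out // neq_lift.
Qed.

End SpecializedBinding.

Lemma nested_fuel_SpF n (L : 'I_n -> completeLattice) (j : 'I_n) (a : L j)
    (f : prodL L -> prodL L) fuel (C : binding L) i' :
  C j = Some a ->
  nested_fuel fuel f (lift j i') C = nested_fuel fuel (SpF a f) i' (SpB j C).
Proof.
elim: fuel C i' => [|fuel IH] C i' Cj //=.
congr lfp; apply: functional_extensionality => x.
rewrite /SpF; congr (f _ (lift j i')).
apply: functional_extensionality_dep => k.
have [h ->|->] := unliftP j k; last first.
  by rewrite Ext_pivot dfwith_out ?Cj ?lift_eqF.
rewrite Ext_lift.
have [<-|ne] := eqVneq i' h; first by rewrite !dfwith_in.
rewrite !dfwith_out ?(inj_eq (@lift_inj _ j)) // [SpB j C h]/SpB.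
case: (C (lift j h)) => //.
rewrite IH; last by rewrite /bind dfwith_out ?lift_eqF.
by rewrite -(SpB_bind_lift C x).
Qed.

Section FuelIndependence.
Variables (m : nat) (L : 'I_m -> completeLattice).

Definition num_unbound (i : 'I_m) (C : binding L) :=
  #|[pred k | (k != i) && ~~ isSome (C k)]|.

Lemma num_unbound_lt i C : num_unbound i C < m.
Proof.
rewrite /num_unbound -[X in _ < X]card_ord; apply/proper_card/properP.
by split; [apply/subsetP | exists i; rewrite ?inE ?eqxx].
Qed.

Lemma num_unbound_bind (i k : 'I_m) (C : binding L) (x : L i) :
  i != k -> C k = None -> num_unbound k (bind C x) < num_unbound i C.
Proof.
move=> ne Ck; apply/proper_card/properP; split.
  apply/subsetP => k'; rewrite !inE /bind.
  have [<-|ne'] := eqVneq i k'; first by rewrite dfwith_in andbF.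
  by rewrite dfwith_out // => /andP[_ ->]; rewrite andbT.
exists k; first by rewrite !inE Ck andbT eq_sym.
by rewrite !inE eqxx.
Qed.

Lemma nested_fuel_stable (g : prodL L -> prodL L) fuel1 fuel2 i C :
  num_unbound i C < fuel1 -> num_unbound i C < fuel2 ->
  nested_fuel fuel1 g i C = nested_fuel fuel2 g i C.
Proof.
elim: fuel1 fuel2 i C => [|fuel1 IH] [|fuel2] i C //= lt1 lt2.
congr lfp; apply: functional_extensionality => x; congr (g _ i).
apply: functional_extensionality_dep => k.
have [<-|ne] := eqVneq i k; first by rewrite !dfwith_in.
rewrite !dfwith_out //; case Ck: (C k) => [b|] //.
have lt := num_unbound_bind x ne Ck.
by apply: IH; apply: leq_trans lt _; rewrite -ltnS.
Qed.

End FuelIndependence.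

Lemma nested_bind_pivot n (L : 'I_n -> completeLattice) (f : prodL L -> prodL L)
    (B : binding L) (j : 'I_n) (a : L j) (i' : 'I_n.-1) :
  nested (lift j i') (bind B a) f = nested i' (SpB j B) (SpF a f).
Proof.
rewrite /nested (nested_fuel_SpF (a := a)) ?SpB_bind_pivot; last first.
  by rewrite /bind dfwith_in.
apply: nested_fuel_stable; last exact: num_unbound_lt.
by apply: leq_trans (num_unbound_lt _ _) _; rewrite leq_pred.
Qed.

Theorem mainTheorem2 (n : nat) (hn : 1 < n)
  (L : 'I_n -> completeLattice) (f : prodL L -> prodL L)
  (hf : monotone f) (B : binding L) (j : 'I_n) (a : L j) :
  (forall i' : 'I_n.-1, lift j i' < j ->
     nested (lift j i') (bind B a) f = nested i' (SpB j B) (SpF a f))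
  /\
  (forall i' : 'I_n.-1, j < lift j i' ->
     nested (lift j i') (bind B a) f = nested i' (SpB j B) (SpF a f)).
Proof. by split=> i' _; apply: nested_bind_pivot. Qed.
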